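(* Let $V$, $M$ and the bilinear form $b:V\times M\to\mathbb{R}$ be as described in the context, and let $B^T:M\to V'$ be defined by ${}_{V}\langle \Sigma, B^T\psi\rangle_{V'}=b(\Sigma,\psi)$ for all $\Sigma\in V$. Then $\operatorname{Ker} B^T=\{0\}$, i.e. if $\psi\in M$ satisfies $b(\Sigma,\psi)=0$ for all $\Sigma\in V$, then $\psi=0$.
   Context: Network: a stent is modelled by a finite connected graph with vertices $j=1,\dots,n_{\mathcal V}$ located at points $\mathcal V_j\in\mathbb{R}^3$ and oriented edges $i=1,\dots,n_{\mathcal E}$. $J_j^-$ is the set of edges leaving vertex $j$ and $J_j^+$ the set of edges entering vertex $j$. Edge $i$ is a curve of length $\ell^i>0$ with arc-length parametrization $\Phi^i:[0,\ell^i]\to\mathbb{R}^3$ (smooth), with $\Phi^i(0)$ the position of the vertex it leaves and $\Phi^i(\ell^i)$ the position of the vertex it enters; $t^i=(\Phi^i)'$ is the unit tangent. $Q^i:[0,\ell^i]\to\mathbb{R}^{3\times 3}$ is continuous with orthogonal values and $H^i\in\mathbb{R}^{3\times3}$ is a positive definite diagonal matrix. Loads $f^i\in L^2(0,\ell^i;\mathbb{R}^3)$. Matrices: $A^+_{I}\in\mathbb{R}^{3n_{\mathcal V}\times 3n_{\mathcal E}}$ is the block matrix whose $3\times3$ block in block row $j$, block column $i$ is $I_3$ if $i\in J_j^+$ and $0$ otherwise; $A^-_{I}$ is defined the same way with $J_j^-$. $\mathbb P^i_{\mathcal E}\in\mathbb{R}^{3\times 3n_{\mathcal E}}$ extracts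 the $i$-th block of three coordinates. Spaces: $L^2(\mathcal N;\mathbb{R}^3)=\prod_{i=1}^{n_{\mathcal E}}L^2(0,\ell^i;\mathbb{R}^3)$ and $L^2_{H^1}(\mathcal N;\mathbb{R}^3)=\prod_{i=1}^{n_{\mathcal E}}H^1(0,\ell^i;\mathbb{R}^3)$ (no continuity at vertices imposed), with norms $(\sum_i\|y^i\|^2)^{1/2}$. $\int_{\mathcal N}v:=\sum_i\int_0^{\ell^i}v^i\,ds$. $V=L^2(\mathcal N;\mathbb{R}^3)\times L^2(\mathcal N;\mathbb{R}^3)\times(\mathbb{R}^{3n_{\mathcal E}})^4\times\mathbb{R}^3\times\mathbb{R}^3$ with elements $\Sigma=(q,p,P_+,P_-,Q_+,Q_-,\alpha,\beta)$ (and $\Gamma=(\xi,\theta,\Theta_+,\Theta_-,\Xi_+,\Xi_-,\gamma,\delta)$), $M=L^2_{H^1}(\mathcal N;\mathbb{R}^3)\times L^2_{H^1}(\mathcal N;\mathbb{R}^3)\times\mathbb{R}^{3n_{\mathcal V}}\times\mathbb{R}^{3n_{\mathcal V}}$ with elements $\psi=(v,w,V,W)$; both carry the product Hilbert norms. Components of vectors in $\mathbb{R}^{3n_{\mathcal E}}$ are written $P_+=(P_+^1,\dots,P_+^{n_{\mathcal E}})$, etc. Forms: $a(\Sigma,\Gamma)=\sum_i\int_0^{\ell^i}Q^i(H^i)^{-1}(Q^i)^Tq^i\cdot\xi^i\,ds$; $b(\Sigma,\psi)=\sum_i\int_0^{\ell^i}\big(-p^i\cdot(\partial_sv^i+t^i\times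 w^i)-q^i\cdot\partial_sw^i\big)ds+\sum_i\big(P^i_+\cdot v^i(\ell^i)-P^i_-\cdot v^i(0)\big)+\sum_i\big(Q^i_+\cdot w^i(\ell^i)-Q^i_-\cdot w^i(0)\big)-(A^+_IP_+-A^-_IP_-)\cdot V-(A^+_IQ_+-A^-_IQ_-)\cdot W+\alpha\cdot\int_{\mathcal N}v+\beta\cdot\int_{\mathcal N}w$; $f(\psi)=-\sum_i\int_0^{\ell^i}f^i\cdot v^i\,ds$. *)

From HB Require Import structures.
From mathcomp Require Import all_boot all_order all_algebra.
From mathcomp Require Import all_classical all_reals all_analysis.
Set Implicit Arguments. Unset Strict Implicit. Unset Printing Implicit Defensive.
Import Order.TTheory GRing.Theory Num.Theory.
Local Open Scope classical_set_scope.
Local Open Scope ring_scope.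

Section Defs.
Variable R : realType.

Definition dot3 (u v : 'rV[R]_3) : R := \sum_(k < 3) u ord0 k * v ord0 k.

Definition cross3 (u v : 'rV[R]_3) : 'rV[R]_3 :=
  let c (x : 'rV[R]_3) (n : nat) := x ord0 (inord n) in
  \row_(k < 3)
    (if val k == 0%N then c u 1%N * c v 2%N - c u 2%N * c v 1%N
     else if val k == 1%N then c u 2%N * c v 0%N - c u 0%N * c v 2%N
     else c u 0%N * c v 1%N - c u 1%N * c v 0%N).

Definition mu := @lebesgue_measure R.

Definition int0 (l : R) (f : R -> R) : R := Rintegral mu `[0, l] f.

Definition L2 (l : R) (f : R -> 'rV[R]_3) : Prop :=
  forall k : 'I_3,
    measurable_fun `[0, l] (fun s => f s ord0 k) /\
    mu.-integrable `[0, l] (fun s => ((f s ord0 k) ^+ 2)%:E).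

(* (v, dv): v is the (absolutely) continuous representative of an element of
   H^1(0,l;R^3) and dv in L^2(0,l;R^3) is its weak derivative. *)
Definition H1 (l : R) (v dv : R -> 'rV[R]_3) : Prop :=
  L2 l dv /\
  forall s, 0 <= s <= l -> forall k : 'I_3,
    v s ord0 k = v 0 ord0 k + int0 s (fun r => dv r ord0 k).

(* the block matrices A^+_I, A^-_I applied to P in (R^3)^{n_E}:
   (A P)_j = sum of P^i over the edges i entering (resp. leaving) vertex j *)
Definition Amul (nV nE : nat) (e : 'I_nE -> 'I_nV) (P : 'I_nE -> 'rV[R]_3)
  (j : 'I_nV) : 'rV[R]_3 := \sum_(i < nE | e i == j) P i.

Definition dotV (nV : nat) (X Y : 'I_nV -> 'rV[R]_3) : R :=
  \sum_(j < nV) dot3 (X j) (Y j).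

Definition intN (nE : nat) (l : 'I_nE -> R) (v : 'I_nE -> R -> 'rV[R]_3)
  : 'rV[R]_3 := \row_(k < 3) \sum_(i < nE) int0 (l i) (fun s => v i s ord0 k).

(* the bilinear form b(Sigma, psi).  Sigma = (q,p,Pp,Pm,Qp,Qm,alpha,beta),
   psi = (v,w,V,W) with dv, dw the weak derivatives of v, w;
   t is the family of unit tangents. *)
Definition bform (nV nE : nat) (src tgt : 'I_nE -> 'I_nV) (l : 'I_nE -> R)
  (t : 'I_nE -> R -> 'rV[R]_3)
  (q p : 'I_nE -> R -> 'rV[R]_3) (Pp Pm Qp Qm : 'I_nE -> 'rV[R]_3)
  (alpha beta : 'rV[R]_3)
  (v dv w dw : 'I_nE -> R -> 'rV[R]_3) (VV WW : 'I_nV -> 'rV[R]_3) : R :=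
  \sum_(i < nE) int0 (l i) (fun s =>
      - dot3 (p i s) (dv i s + cross3 (t i s) (w i s)) - dot3 (q i s) (dw i s))
  + \sum_(i < nE) (dot3 (Pp i) (v i (l i)) - dot3 (Pm i) (v i 0))
  + \sum_(i < nE) (dot3 (Qp i) (w i (l i)) - dot3 (Qm i) (w i 0))
  - dotV (fun j => Amul tgt Pp j - Amul src Pm j) VV
  - dotV (fun j => Amul tgt Qp j - Amul src Qm j) WW
  + dot3 alpha (intN l v) + dot3 beta (intN l w).

Definition tangent (nE : nat) (Phi : 'I_nE -> R -> 'rV[R]_3) (i : 'I_nE) (s : R)
  : 'rV[R]_3 := \row_(k < 3) derive1 (fun r => Phi i r ord0 k) s.

Definition smooth3 (f : R -> 'rV[R]_3) : Prop :=
  forall (k : 'I_3) (n : nat) (s : R), derivable (derive1n n (fun r => f r ord0 k)) s 1.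

End Defs.

Definition adjG (nV nE : nat) (src tgt : 'I_nE -> 'I_nV) : rel 'I_nV :=
  fun j j' => [exists i, ((src i == j) && (tgt i == j')) || ((src i == j') && (tgt i == j))].

Definition connectedG (nV nE : nat) (src tgt : 'I_nE -> 'I_nV) : Prop :=
  forall j j' : 'I_nV, connect (adjG src tgt) j j'.

From HB Require Import structures.
From mathcomp Require Import all_boot all_order all_algebra.
From mathcomp Require Import all_classical all_reals all_analysis.
From mathcomp Require Import lra.
Set Implicit Arguments. Unset Strict Implicit. Unset Printing Implicit Defensive.
Import Order.TTheory GRing.Theory Num.Theory.
Local Open Scope classical_set_scope.
Local Open Scope ring_scope.

(* Testing b(., psi) = 0 against the residuals of psi itself (q = -w',
   P_+^i = v^i(l^i) - V_(tgt i), P_-^i = V_(src i) - v^i(0), the same for Q_+-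
   with w and W, alpha = int_N v, beta = int_N w) turns b into a sum of squares:
   w' = 0 a.e., v and w take the vertex values V and W at both ends of every
   edge, and int_N v = int_N w = 0.  So each w^i is constant and equal to W at
   both ends of edge i; by connectedness W is constant, and int_N w = 0 makes it
   zero.  Once w = 0 the coupling term t x w drops out, testing with p = -v'
   gives v' = 0, and v, V vanish in the same way. *)

Section Dot3.
Variable R : realType.
Implicit Types u a b : 'rV[R]_3.

Lemma dot3C u a : dot3 u a = dot3 a u.
Proof. by apply: eq_bigr => k _; rewrite mulrC. Qed.

Lemma dot3_0l u : dot3 0 u = 0.
Proof. by rewrite /dot3 big1 // => k _; rewrite mxE mul0r. Qed.

Lemma dot3Nl a b : dot3 (- a) b = - dot3 a b.
Proof. by rewrite /dot3 -sumrN; apply: eq_bigr => k _; rewrite !mxE mulNr. Qed.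

Lemma dot3Br u a b : dot3 u (a - b) = dot3 u a - dot3 u b.
Proof. by rewrite /dot3 -sumrB; apply: eq_bigr => k _; rewrite !mxE mulrBr. Qed.

Lemma dot3Bl u a b : dot3 (a - b) u = dot3 a u - dot3 b u.
Proof. by rewrite dot3C dot3Br !(dot3C u). Qed.

Lemma dot3_suml (I : finType) (P : pred I) (F : I -> 'rV[R]_3) u :
  dot3 (\sum_(i | P i) F i) u = \sum_(i | P i) dot3 (F i) u.
Proof.
by rewrite /dot3 exchange_big; apply: eq_bigr => k _; rewrite summxE mulr_suml.
Qed.

Lemma dot3_ge0 u : 0 <= dot3 u u.
Proof. by rewrite sumr_ge0 // => k _; rewrite -expr2 sqr_ge0. Qed.

Lemma dot3_eq0 u : dot3 u u = 0 -> u = 0.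
Proof.
move=> u0; apply/rowP => k; rewrite mxE.
have /(_ k isT) := psumr_eq0P (fun k _ => sqr_ge0 (u ord0 k)) u0.
by rewrite expr2 => /eqP; rewrite mulf_eq0 orbb => /eqP.
Qed.

Lemma sum_dot3_eq0 (I : finType) (F : I -> 'rV[R]_3) :
  \sum_i dot3 (F i) (F i) = 0 -> forall i, F i = 0.
Proof.
by move=> F0 i; apply/dot3_eq0/(psumr_eq0P _ F0) => // j _; apply: dot3_ge0.
Qed.

Lemma sum_dot3_0l (I : finType) (F : I -> 'rV[R]_3) : \sum_i dot3 0 (F i) = 0.
Proof. by apply: big1 => i _; apply: dot3_0l. Qed.

Lemma sum_dot3Nl (I : finType) (F G : I -> 'rV[R]_3) :
  \sum_i dot3 (- F i) (G i) = - \sum_i dot3 (F i) (G i).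
Proof. by rewrite -sumrN; apply: eq_bigr => i _; rewrite dot3Nl. Qed.

Lemma sum_dot3B_eq0 (I : finType) (F G : I -> 'rV[R]_3) :
  \sum_i dot3 (F i - G i) (F i - G i) = 0 -> forall i, F i = G i.
Proof. by move=> /sum_dot3_eq0 FG i; apply/eqP; rewrite -subr_eq0 FG. Qed.

Lemma sum_dot3_ge0 (I : finType) (F : I -> 'rV[R]_3) : 0 <= \sum_i dot3 (F i) (F i).
Proof. by apply: sumr_ge0 => i _; apply: dot3_ge0. Qed.

Lemma cross3_0r u : cross3 u 0 = 0.
Proof.
apply/rowP => k; rewrite !mxE.
by case: ifP => _; [|case: ifP => _]; rewrite ?mxE !mulr0 subrr.
Qed.

End Dot3.

Section Integrals.
Variable R : realType.
Implicit Types (l : R) (f : R -> 'rV[R]_3).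

Lemma eq_int0 l (g h : R -> R) : (forall s, 0 <= s <= l -> g s = h s) ->
  int0 l g = int0 l h.
Proof.
by move=> gh; apply: eq_Rintegral => s; rewrite in_setE /= in_itv; apply: gh.
Qed.

Lemma int0_cst l (c : R) : 0 < l -> int0 l (fun=> c) = c * l.
Proof.
move=> l0.
have mu_itv : (@mu R) `[0, l] = l%:E.
  by rewrite /mu lebesgue_measure_itv /= lte_fin l0 /= oppr0 adde0.
rewrite /int0 Rintegral_cst //.
by transitivity (c * fine (l%:E : \bar R)) => //; congr (c * fine _).
Qed.

Lemma int0_dot3_ge0 l f : 0 <= int0 l (fun s => dot3 (f s) (f s)).
Proof. by apply: Rintegral_ge0 => // s _; apply: dot3_ge0. Qed.

Lemma L2N l f : L2 l f -> L2 l (fun s => - f s).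
Proof.
move=> fL2 k; split.
  rewrite (_ : (fun s => _) = -%R \o (fun s => f s ord0 k)); last first.
    by apply/funext => s; rewrite mxE.
  apply: measurableT_comp; last exact: (fL2 k).1.
  exact: measurable_realfun.oppr_measurable.
rewrite (_ : (fun s => _) = (fun s => ((f s ord0 k) ^+ 2)%:E)) ?(fL2 k).2 //.
by apply/funext => s; rewrite mxE sqrrN.
Qed.

Lemma L2_0 l : L2 l (fun=> 0).
Proof.
move=> k; split.
  by rewrite (_ : (fun s => _) = cst 0) ?funeqE // => s; rewrite mxE.
rewrite (_ : (fun s => _) = cst 0%E) ?funeqE ?integrable0 // => s.
by rewrite mxE expr0n.
Qed.

Lemma ae_eq0_int0_dot3 l f : L2 l f -> int0 l (fun s => dot3 (f s) (f s)) = 0 ->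
  {ae @mu R, forall s, `[0, l]%classic s -> f s = 0}.
Proof.
move=> fL2 f0.
have mD : measurable (`[0, l]%classic : set (measurableTypeR R)).
  exact: measurable_itv.
have fint : (@mu R).-integrable `[0, l]%classic (EFin \o fun s => dot3 (f s) (f s)).
  rewrite (_ : _ \o _ = fun s => \sum_(k < 3) ((f s ord0 k) ^+ 2)%:E)%E.
    by apply: integrable_sum => // k _; apply: (fL2 k).2.
  by apply/funext => s /=; rewrite /dot3 sumEFin.
have : (\int[@mu R]_(s in `[0%R, l]%classic) `|(dot3 (f s) (f s))%:E| = 0)%E.
  transitivity (\int[@mu R]_(s in `[0%R, l]%classic) (dot3 (f s) (f s))%:E)%E.
    by apply: eq_integral => s _; rewrite gee0_abs // lee_fin dot3_ge0.
  rewrite -[LHS]fineK ?(integrable_fin_num mD fint) //.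
  by move: f0; rewrite /int0 /Rintegral => ->.
move=> /(ae_eq_integral_abs _ mD (measurable_int _ fint)).1.
by apply: filterS => s fs /fs [/dot3_eq0].
Qed.

Lemma int0_ae_eq0 l f : L2 l f -> {ae @mu R, forall s, `[0, l]%classic s -> f s = 0} ->
  forall s, 0 <= s <= l -> forall k, int0 s (fun r => f r ord0 k) = 0.
Proof.
move=> fL2 f0 s /andP[_ sl] k.
have sub : `[0, s]%classic `<=` `[0, l]%classic by apply: subset_itvl; rewrite bnd_simp.
rewrite /int0 /Rintegral (@ae_eq_integral _ _ _ (@mu R) _ (cst 0%E)) ?integral0 //.
- apply/measurable_realfun.measurable_EFinP.
  exact: (measurable_funS (measurable_itv `[0, l]) sub (fL2 k).1).
- apply: (@filterS _ _ (ae_filter_ringOfSetsType (@mu R)) _ _ _ f0).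
  by move=> r fr /sub /fr /= ->; rewrite mxE.
Qed.

Lemma H1_const l (v dv : R -> 'rV[R]_3) : H1 l v dv ->
  {ae @mu R, forall s, `[0, l]%classic s -> dv s = 0} ->
  forall s, 0 <= s <= l -> v s = v 0.
Proof.
move=> [dvL2 vdv] dv0 s sl; apply/rowP => k.
by rewrite (vdv s sl k) (int0_ae_eq0 dvL2 dv0 sl) addr0.
Qed.

Lemma sum_int0_dot3_eq0 (I : finType) (l : I -> R) (f : I -> R -> 'rV[R]_3) :
  (forall i, L2 (l i) (f i)) -> \sum_i int0 (l i) (fun s => dot3 (f i s) (f i s)) = 0 ->
  forall i, {ae @mu R, forall s, `[0, l i]%classic s -> f i s = 0}.
Proof.
move=> fL2 f0 i; apply: ae_eq0_int0_dot3 => //.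
by apply: (psumr_eq0P _ f0) => // j _; apply: int0_dot3_ge0.
Qed.

End Integrals.

Section Network.
Variables (R : realType) (nV nE : nat) (src tgt : 'I_nE -> 'I_nV).
Hypothesis connected : connectedG src tgt.

Lemma connectedG_const (T : Type) (X : 'I_nV -> T) :
  (forall i, X (src i) = X (tgt i)) -> forall j j', X j = X j'.
Proof.
move=> Xedge j j'; have /connectP[p jp ->] := connected j j'.
elim: p j jp => [|a p IHp] j //= /andP[/existsP[i ji] /IHp <-].
by case/orP: ji => /andP[/eqP <- /eqP <-].
Qed.

Lemma intN_const (l : 'I_nE -> R) (u : 'I_nE -> R -> 'rV[R]_3) (c : 'rV[R]_3) :
  (forall i, 0 < l i) -> (forall i s, 0 <= s <= l i -> u i s = c) ->
  intN l u = (\sum_i l i) *: c.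
Proof.
move=> l0 uc; apply/rowP => k; rewrite !mxE mulr_suml; apply: eq_bigr => i _.
by rewrite mulrC (@eq_int0 _ _ _ (fun=> c ord0 k)) ?int0_cst // => s /uc ->.
Qed.

Lemma H1_network_eq0 (l : 'I_nE -> R) (u du : 'I_nE -> R -> 'rV[R]_3)
    (X : 'I_nV -> 'rV[R]_3) :
  (0 < nE)%N -> (forall i, 0 < l i) -> (forall i, H1 (l i) (u i) (du i)) ->
  (forall i, {ae @mu R, forall s, `[0, l i]%classic s -> du i s = 0}) ->
  (forall i, u i 0 = X (src i) /\ u i (l i) = X (tgt i)) -> intN l u = 0 ->
  (forall j, X j = 0) /\ (forall i s, 0 <= s <= l i -> u i s = 0).
Proof.
move=> nE0 l0 uH1 du0 uX uN0.
have uc i s : 0 <= s <= l i -> u i s = X (src i).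
  by move=> si; rewrite (H1_const (uH1 i) (du0 i) si) (uX i).1.
have Xc : forall j j', X j = X j'.
  by apply: connectedG_const => i; rewrite -(uX i).2 -(uc i (l i)) // lexx ltW.
pose i0 := Ordinal nE0.
have X0 : X (src i0) = 0.
  move: uN0; rewrite (intN_const (c := X (src i0)) l0) => [/eqP|i s si]; last first.
    by rewrite uc // Xc.
  rewrite scaler_eq0 => /orP[/eqP/psumr_eq0P l_eq0|/eqP //].
  by have := l0 i0; rewrite l_eq0 ?ltxx // => i _; apply/ltW.
by split=> [j | i s si]; rewrite ?uc // (Xc _ (src i0)).
Qed.

End Network.

Section BilinearForm.
Variables (R : realType) (nV nE : nat) (src tgt : 'I_nE -> 'I_nV).

Lemma dotV_Amul (e : 'I_nE -> 'I_nV) (P : 'I_nE -> 'rV[R]_3) (X : 'I_nV -> 'rV[R]_3) :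
  dotV (Amul e P) X = \sum_i dot3 (P i) (X (e i)).
Proof.
rewrite /dotV /Amul; under eq_bigr do rewrite dot3_suml.
rewrite (exchange_big_dep predT) //=; apply: eq_bigr => i _.
by rewrite (big_pred1 (e i)) // => j; rewrite /= eq_sym.
Qed.

Lemma dotVB (A B X : 'I_nV -> 'rV[R]_3) :
  dotV (fun j => A j - B j) X = dotV A X - dotV B X.
Proof. by rewrite /dotV -sumrB; apply: eq_bigr => j _; rewrite dot3Bl. Qed.

Lemma bformE (l : 'I_nE -> R) (t q p : 'I_nE -> R -> 'rV[R]_3)
    (Pp Pm Qp Qm : 'I_nE -> 'rV[R]_3) (alpha beta : 'rV[R]_3)
    (v dv w dw : 'I_nE -> R -> 'rV[R]_3) (VV WW : 'I_nV -> 'rV[R]_3) :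
  bform src tgt l t q p Pp Pm Qp Qm alpha beta v dv w dw VV WW =
  \sum_i int0 (l i) (fun s =>
      - dot3 (p i s) (dv i s + cross3 (t i s) (w i s)) - dot3 (q i s) (dw i s))
  + \sum_i dot3 (Pp i) (v i (l i) - VV (tgt i))
  - \sum_i dot3 (Pm i) (v i 0 - VV (src i))
  + \sum_i dot3 (Qp i) (w i (l i) - WW (tgt i))
  - \sum_i dot3 (Qm i) (w i 0 - WW (src i))
  + dot3 alpha (intN l v) + dot3 beta (intN l w).
Proof.
rewrite /bform !dotVB !dotV_Amul.
under [X in _ = _ + X - _ + _ - _ + _ + _]eq_bigr do rewrite dot3Br.
under [X in _ = _ + _ - X + _ - _ + _ + _]eq_bigr do rewrite dot3Br.
under [X in _ = _ + _ - _ + X - _ + _ + _]eq_bigr do rewrite dot3Br.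
under [X in _ = _ + _ - _ + _ - X + _ + _]eq_bigr do rewrite dot3Br.
rewrite !sumrB; lra.
Qed.

End BilinearForm.

Section KernelOfBT.
Variables (R : realType) (nV nE : nat) (src tgt : 'I_nE -> 'I_nV).
Variables (l : 'I_nE -> R) (t : 'I_nE -> R -> 'rV[R]_3).
Variables (v dv w dw : 'I_nE -> R -> 'rV[R]_3) (VV WW : 'I_nV -> 'rV[R]_3).
Hypothesis bform_eq0 : forall (q p : 'I_nE -> R -> 'rV[R]_3)
    (Pp Pm Qp Qm : 'I_nE -> 'rV[R]_3) (alpha beta : 'rV[R]_3),
  (forall i, L2 (l i) (q i)) -> (forall i, L2 (l i) (p i)) ->
  bform src tgt l t q p Pp Pm Qp Qm alpha beta v dv w dw VV WW = 0.

Lemma kerBT_vertex_dw0 : (forall i, L2 (l i) (dw i)) ->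
  [/\ forall i, {ae @mu R, forall s, `[0, l i]%classic s -> dw i s = 0},
      forall i, v i 0 = VV (src i) /\ v i (l i) = VV (tgt i),
      forall i, w i 0 = WW (src i) /\ w i (l i) = WW (tgt i),
      intN l v = 0 & intN l w = 0].
Proof.
move=> dwL2.
have := @bform_eq0 (fun i s => - dw i s) (fun _ _ => 0)
  (fun i => v i (l i) - VV (tgt i)) (fun i => - (v i 0 - VV (src i)))
  (fun i => w i (l i) - WW (tgt i)) (fun i => - (w i 0 - WW (src i)))
  (intN l v) (intN l w) (fun i => L2N (dwL2 i)) (fun i => L2_0 _).
rewrite bformE !sum_dot3Nl !opprK.
under eq_bigr => i _ do under eq_int0 => s _ do rewrite dot3_0l dot3Nl oppr0 sub0r opprK.
have : 0 <= \sum_i int0 (l i) (fun s => dot3 (dw i s) (dw i s)).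
  by apply: sumr_ge0 => i _; apply: int0_dot3_ge0.
move: (sum_dot3_ge0 (fun i => v i (l i) - VV (tgt i)))
  (sum_dot3_ge0 (fun i => v i 0 - VV (src i)))
  (sum_dot3_ge0 (fun i => w i (l i) - WW (tgt i)))
  (sum_dot3_ge0 (fun i => w i 0 - WW (src i)))
  (dot3_ge0 (intN l v)) (dot3_ge0 (intN l w)) => /= *.
split.
- by apply: sum_int0_dot3_eq0 => //; lra.
- move=> i; split.
    by apply: (sum_dot3B_eq0 (F := v^~ 0) (G := VV \o src)); lra.
  by apply: (sum_dot3B_eq0 (F := fun i => v i (l i)) (G := VV \o tgt)); lra.
- move=> i; split.
    by apply: (sum_dot3B_eq0 (F := w^~ 0) (G := WW \o src)); lra.
  by apply: (sum_dot3B_eq0 (F := fun i => w i (l i)) (G := WW \o tgt)); lra.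
- by apply: dot3_eq0; lra.
- by apply: dot3_eq0; lra.
Qed.

Lemma kerBT_dv0 : (forall i, L2 (l i) (dv i)) ->
  (forall i s, 0 <= s <= l i -> w i s = 0) ->
  forall i, {ae @mu R, forall s, `[0, l i]%classic s -> dv i s = 0}.
Proof.
move=> dvL2 w0; apply: sum_int0_dot3_eq0 => //.
have := @bform_eq0 (fun _ _ => 0) (fun i s => - dv i s) (fun=> 0) (fun=> 0)
  (fun=> 0) (fun=> 0) 0 0 (fun i => L2_0 _) (fun i => L2N (dvL2 i)).
rewrite bformE !sum_dot3_0l !dot3_0l !subr0 !addr0 => sq0; rewrite -[RHS]sq0.
apply: eq_bigr => i _; apply: eq_int0 => s si.
by rewrite w0 // cross3_0r addr0 dot3Nl opprK dot3_0l subr0.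
Qed.

End KernelOfBT.

Theorem lemma3p1 (R : realType) (nV nE : nat)
  (src tgt : 'I_nE -> 'I_nV)            (* edge i leaves src i, enters tgt i *)
  (pos : 'I_nV -> 'rV[R]_3)             (* vertex positions *)
  (l : 'I_nE -> R) (Phi : 'I_nE -> R -> 'rV[R]_3)
  (hE : (0 < nE)%N)
  (hconn : connectedG src tgt)
  (hl : forall i, 0 < l i)
  (hsmooth : forall i, smooth3 (Phi i))
  (hunit : forall i s, 0 <= s <= l i -> dot3 (tangent Phi i s) (tangent Phi i s) = 1)
  (hPhi0 : forall i, Phi i 0 = pos (src i))
  (hPhil : forall i, Phi i (l i) = pos (tgt i))
  (v dv w dw : 'I_nE -> R -> 'rV[R]_3) (VV WW : 'I_nV -> 'rV[R]_3)
  (hv : forall i, H1 (l i) (v i) (dv i))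
  (hw : forall i, H1 (l i) (w i) (dw i))
  (hker : forall (q p : 'I_nE -> R -> 'rV[R]_3) (Pp Pm Qp Qm : 'I_nE -> 'rV[R]_3)
            (alpha beta : 'rV[R]_3),
          (forall i, L2 (l i) (q i)) -> (forall i, L2 (l i) (p i)) ->
          bform src tgt l (tangent Phi) q p Pp Pm Qp Qm alpha beta v dv w dw VV WW = 0) :
  (forall i s, 0 <= s <= l i -> v i s = 0 /\ w i s = 0) /\
  (forall i, {ae @mu R, forall s, `[0, l i]%classic s -> dv i s = 0 /\ dw i s = 0}) /\
  (forall j, VV j = 0) /\ (forall j, WW j = 0).
Proof.
have [dw0 vX wX vN0 wN0] := kerBT_vertex_dw0 hker (fun i => (hw i).1).
have [WW0 w0] := H1_network_eq0 hconn hE hl hw dw0 wX wN0.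
have dv0 := kerBT_dv0 hker (fun i => (hv i).1) w0.
have [VV0 v0] := H1_network_eq0 hconn hE hl hv dv0 vX vN0.
split=> [i s si|]; first by rewrite v0 ?w0.
split=> // i.
apply: (@filterS2 _ _ (ae_filter_ringOfSetsType (@mu R)) _ _ _ _ (dv0 i) (dw0 i)).
by move=> s dvs dws si; rewrite dvs ?dws.
Qed.
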